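(* Let $k=\mathbb{F}_3$ and let $M$ be a $7\times 7$ matrix over $k$ that is self-adjoint for the bilinear form $\langle x,y\rangle=x_1y_7+x_2y_6+\dots+x_7y_1$ on $k^7$ and regular semisimple (i.e. has $7$ distinct eigenvalues in an algebraic closure of $k$). Then $M$ is not properly blockwise triangular: there is no $m\in\{1,\dots,6\}$ such that $M_{ij}=0$ for all $i>m$ and $j\le m$.
   Context: $M_{ij}$ denotes the entry in row $i$ and column $j$. Self-adjointness for this form means $M_{ij}=M_{8-j,8-i}$ for all $i,j$. *)

From HB Require Import structures.
From mathcomp Require Import all_boot all_order all_algebra all_field.
Set Implicit Arguments. Unset Strict Implicit. Unset Printing Implicit Defensive.
Import GRing.Theory.
Local Open Scope ring_scope.

(* Self-adjointness for <x,y> = x_1 y_n + ... + x_n y_1 (0-indexed: rev_ord):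
   M_{ij} = M_{n+1-j, n+1-i}. *)
Definition antidiag_self_adjoint (F : nzRingType) (n : nat) (M : 'M[F]_n) : Prop :=
  forall i j : 'I_n, M i j = M (rev_ord j) (rev_ord i).

(* Regular semisimple: M has n distinct eigenvalues in an algebraic closure of F
   (any algebraically closed field extension of F). *)
Definition regular_semisimple (F : fieldType) (n : nat) (M : 'M[F]_n) : Prop :=
  exists (L : closedFieldType) (f : {rmorphism F -> L}) (s : seq L),
    [/\ uniq s, size s = n & forall a, a \in s -> eigenvalue (map_mx f M) a].

Definition properly_block_triangular (F : nzRingType) (n : nat) (M : 'M[F]_n) : Prop :=
  exists m : nat, [/\ (1 <= m)%N, (m <= n.-1)%N &
    forall i j : 'I_n, (m <= i)%N -> (j < m)%N -> M i j = 0].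

From HB Require Import structures.
From mathcomp Require Import all_boot all_order all_algebra all_field.
From mathcomp Require Import perm zify.
Import GRing.Theory.
Local Open Scope ring_scope.

Set Implicit Arguments.
Unset Strict Implicit.
Unset Printing Implicit Defensive.

(* If M is block upper triangular at m, self-adjointness makes it block upper
   triangular at n - m as well; taking m <= n - m, M has diagonal blocks A, B, C
   of sizes m, n - 2m, m, and C is the antitranspose of A.  Hence
   char_poly M = (char_poly A)^2 * char_poly B has a square factor of positive
   degree, whereas n distinct eigenvalues make char_poly M separable. *)

Section BlockTriangular.

Variable R : comNzRingType.

Definition block_upper_triangular n m (M : 'M[R]_n) :=
  forall i j : 'I_n, (m <= i)%N -> (j < m)%N -> M i j = 0.

Lemma block_upper_triangular_dlsubmx k l (M : 'M[R]_(k + l)) :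
  block_upper_triangular k M -> dlsubmx M = 0.
Proof.
by move=> Mk; apply/matrixP => i j; rewrite !mxE Mk //= ?leq_addr.
Qed.

Lemma char_poly_ublock k l (M : 'M[R]_(k + l)) :
  dlsubmx M = 0 -> char_poly M = char_poly (ulsubmx M) * char_poly (drsubmx M).
Proof.
move=> dl0; rewrite -{1}(submxK M) dl0 /char_poly /char_poly_mx map_block_mx /=.
rewrite map_mx0 scalar_mx_block opp_block_mx add_block_mx oppr0 !addr0.
exact: det_ublock.
Qed.

Lemma char_poly_antitranspose n (A : 'M[R]_n) :
  char_poly (\matrix_(i, j) A (rev_ord j) (rev_ord i)) = char_poly A.
Proof.
pose s : 'S_n := perm (@rev_ord_inj n).
rewrite /char_poly.
have -> : char_poly_mx (\matrix_(i, j) A (rev_ord j) (rev_ord i))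
        = (row_perm s (col_perm s (char_poly_mx A)))^T.
  by apply/matrixP => i j; rewrite !mxE !permE (inj_eq rev_ord_inj) eq_sym.
rewrite det_tr row_permE col_permE !det_mulmx !det_perm odd_permV.
by rewrite mulrC -mulrA -expr2 sqrr_sign mulr1.
Qed.

Lemma self_adjoint_block_upper_triangular_sub n m (M : 'M[R]_n) :
  antidiag_self_adjoint M -> block_upper_triangular m M ->
  block_upper_triangular (n - m) M.
Proof.
move=> sa Mm i j le_i lt_j; rewrite sa; apply: Mm => /=;
  have := ltn_ord i; have := ltn_ord j; lia.
Qed.

Lemma char_poly_self_adjoint_three_blocks m p (M : 'M[R]_(m + p + m)) :
  antidiag_self_adjoint M ->
  block_upper_triangular m M -> block_upper_triangular (m + p) M ->
  char_poly M = char_poly (ulsubmx (ulsubmx M)) ^+ 2 * char_poly (drsubmx (ulsubmx M)).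
Proof.
move=> sa Mm Mmp.
have ulM_m : block_upper_triangular m (ulsubmx M).
  by move=> i j le_i lt_j; rewrite !mxE Mm.
have chiD : char_poly (drsubmx M) = char_poly (ulsubmx (ulsubmx M)).
  rewrite -[RHS]char_poly_antitranspose; congr char_poly; apply/matrixP => i j.
  rewrite !mxE sa; congr (M _ _); apply/val_inj => /=; lia.
rewrite char_poly_ublock ?block_upper_triangular_dlsubmx //.
rewrite char_poly_ublock ?block_upper_triangular_dlsubmx // chiD.
by rewrite mulrAC -expr2.
Qed.

Lemma self_adjoint_block_triangular_char_poly_square n (M : 'M[R]_n) :
  antidiag_self_adjoint M -> properly_block_triangular M ->
  exists q r : {poly R}, (1 < size q)%N /\ char_poly M = q ^+ 2 * r.
Proof.
move=> sa [m [m_gt0 m_lt Mm]].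
wlog le_m : m m_gt0 m_lt Mm / (m <= n - m)%N => [wlog_m|].
  have [|lt_m] := leqP m (n - m); first exact: wlog_m.
  by apply: (wlog_m _ _ _ (self_adjoint_block_upper_triangular_sub sa Mm)); lia.
have Mnm := self_adjoint_block_upper_triangular_sub sa Mm.
have En : n = (m + (n - m - m) + m)%N by lia.
move: (n - m - m)%N En => p En; subst n; rewrite addnK in Mnm.
exists (char_poly (ulsubmx (ulsubmx M))), (char_poly (drsubmx (ulsubmx M))).
split; first by rewrite size_char_poly ltnS.
exact: char_poly_self_adjoint_three_blocks.
Qed.

End BlockTriangular.

Lemma regular_semisimple_separable (F : fieldType) n (M : 'M[F]_n) :
  regular_semisimple M -> separable_poly (char_poly M).
Proof.
case=> L [f [s [s_uniq s_size s_eig]]].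
rewrite -(separable_map f) map_char_poly.
have s_roots : all (root (char_poly (map_mx f M))) s.
  by apply/allP => a /s_eig; rewrite eigenvalue_root_char.
rewrite (all_roots_prod_XsubC _ s_roots) ?uniq_rootsE ?size_char_poly ?s_size //.
by rewrite (monicP (char_poly_monic _)) scale1r separable_prod_XsubC.
Qed.

Lemma self_adjoint_regular_semisimple_not_block_triangular
    (F : fieldType) n (M : 'M[F]_n) :
  antidiag_self_adjoint M -> regular_semisimple M ->
  ~ properly_block_triangular M.
Proof.
move=> sa /regular_semisimple_separable sep.
case/(self_adjoint_block_triangular_char_poly_square sa) => q [r [q_gt1 chiE]].
have q_ne1 : size q != 1%N by rewrite gtn_eqF.
by have := separable_nosquare sep (isT : (1 < 2)%N) q_ne1; rewrite chiE dvdp_mulIl.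
Qed.

Theorem lemma2p5 (M : 'M['F_3]_7) :
  antidiag_self_adjoint M -> regular_semisimple M ->
  ~ properly_block_triangular M.
Proof. exact: self_adjoint_regular_semisimple_not_block_triangular. Qed.
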